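(* For every homeomorphism $h$ of the Kirch space $(\mathbb{N},\tau_K)$ and every odd prime $p$, we have $\tilde h(\mathcal{F}_{\{p,2p\}})=\mathcal{F}_{\{p,2p\}}$, where $\tilde h(\mathcal{F})=\{h[A]:A\in\mathcal{F}\}$.
   Context: $\mathbb{N}=\{1,2,\dots\}$, $\mathbb{N}_0=\{0\}\cup\mathbb{N}$. The Kirch topology $\tau_K$ on $\mathbb{N}$ is generated by the base of all $a+b\mathbb{N}_0=\{a+bn:n\in\mathbb{N}_0\}$ with $a,b\in\mathbb{N}$ coprime and $b$ square-free. Closures $\overline{U}$ are in $\tau_K$; $\tau_x=\{U\in\tau_K:x\in U\}$. For finite $E\subseteq\mathbb{N}$, $\mathcal{F}_E=\{B\subseteq\mathbb{N}:\exists (U_x)_{x\in E}\in\prod_{x\in E}\tau_x\ (\bigcap_{x\in E}\overline{U_x}\subseteq B)\}$. $h[A]=\{h(a):a\in A\}$. *)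

(* Sets of naturals are predicates
   nat -> Prop; the space N = {1,2,...} is the set of n with 0 < n. *)
From mathcomp Require Import all_boot.
Set Implicit Arguments. Unset Strict Implicit. Unset Printing Implicit Defensive.

Definition Npos (n : nat) : Prop := 0 < n.

Definition squarefree (b : nat) : Prop := forall p, prime p -> ~ (p * p %| b).

Definition progr (a b : nat) : nat -> Prop := fun x => exists n, x = a + b * n.

Definition basic_set (a b : nat) : Prop :=
  0 < a /\ 0 < b /\ coprime a b /\ squarefree b.

Definition kopen (U : nat -> Prop) : Prop :=
  (forall x, U x -> Npos x) /\
  forall x, U x -> exists a b, basic_set a b /\ progr a b x /\
                         (forall y, progr a b y -> U y).

Definition kclosure (U : nat -> Prop) : nat -> Prop :=
  fun x => Npos x /\ forall V, kopen V -> V x -> exists y, V y /\ U y.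

Definition FE (E : seq nat) (B : nat -> Prop) : Prop :=
  (forall x, B x -> Npos x) /\
  exists Us : nat -> (nat -> Prop),
    (forall x, x \in E -> kopen (Us x) /\ Us x x) /\
    (forall y, Npos y -> (forall x, x \in E -> kclosure (Us x) y) -> B y).

Definition khomeo (h : nat -> nat) : Prop :=
  (forall x, Npos x -> Npos (h x)) /\
  (forall x y, Npos x -> Npos y -> h x = h y -> x = y) /\
  (forall y, Npos y -> exists x, Npos x /\ h x = y) /\
  (forall U, kopen U -> kopen (fun y => exists x, U x /\ h x = y)) /\
  (forall V, kopen V -> kopen (fun x => Npos x /\ V (h x))).

Definition image (h : nat -> nat) (A : nat -> Prop) : nat -> Prop :=
  fun y => exists x, A x /\ h x = y.

Definition push_family (h : nat -> nat) (F : (nat -> Prop) -> Prop)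
  : (nat -> Prop) -> Prop :=
  fun B => exists A, F A /\ B = image h A.

(* The closure of a basic set is arithmetic: for squarefree b, t lies in the
   closure of e + bN_0 iff t = e modulo every prime l | b not dividing t.
   Hence F_{z} is contained in F_E iff, for every odd prime q not dividing z,
   each nonzero residue mod q that agrees with all elements of E prime to q is
   the residue of z.  In particular F_{z} is contained in F_{p,2p} whenever
   p | z, as p and 2p have distinct nonzero residues modulo any other odd prime.

   A homeomorphism h maps F_E onto F_{h[E]}, so it preserves these inclusions.
   Transporting F_{v} <= F_{p,2p} gives an odd prime r with r | h v <-> p | v
   (were h p and h (2p) without common odd prime factor, some w would satisfy
   F_{z} <= F_{h p, h 2p, w} for all z, which pulls back to a contradiction).
   The points h^-1 d, 0 < d < r, have pairwise distinct nonzero residues mod p,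
   so r <= p, and symmetrically p <= r.  Thus h and h^-1 preserve divisibility
   by p, so F_{h p, h 2p} = F_{p,2p}, which is the image of F_{p,2p}. *)

From mathcomp Require Import all_boot zify.
From Stdlib Require Import FunctionalExtensionality PropExtensionality.

Set Implicit Arguments.
Unset Strict Implicit.
Unset Printing Implicit Defensive.

Notation all_pos E := (all (fun x : nat => 0 < x) E).

Lemma prime_coprime_ndvd l x b : prime l -> l %| b -> coprime x b -> ~~ (l %| x).
Proof.
move=> pl lb cxb; apply/negP => lx.
have : l %| gcdn x b by rewrite dvdn_gcd lx lb.
by rewrite (eqP cxb) Euclid_dvd1.
Qed.

Lemma squarefree_dvd d b : d %| b -> squarefree b -> squarefree d.
Proof. by move=> db sb l pl ll; apply: (sb l pl); apply: dvdn_trans ll db. Qed.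

Lemma squarefree_prime q : prime q -> squarefree q.
Proof.
move=> pq l pl ll; have := dvdn_leq (prime_gt0 pq) ll.
have : l %| q := dvdn_trans (dvdn_mulr l (dvdnn l)) ll.
rewrite dvdn_prime2 // => /eqP <-; have := prime_gt1 pl; nia.
Qed.

Lemma squarefree1 : squarefree 1.
Proof. by move=> l pl /(dvdn_trans (dvdn_mulr l (dvdnn l))); rewrite Euclid_dvd1. Qed.

Lemma squarefree_mul m n : coprime m n -> squarefree m -> squarefree n -> squarefree (m * n).
Proof.
move=> cmn sm sn l pl.
have [lm|lm] := boolP (l %| m).
  have cln : coprime (l * l) n.
    by rewrite coprimeMl prime_coprime // (prime_coprime_ndvd pl lm) // coprime_sym.
  by rewrite Gauss_dvdl //; apply: sm.
by rewrite Gauss_dvdr ?coprimeMl ?prime_coprime ?lm //; apply: sn.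
Qed.

Lemma dvdn_gcdn_div b e : b %/ gcdn b e %| b.
Proof. exact/dvdn_div/dvdn_gcdl. Qed.

Lemma div_gcdn_gt0 b e : 0 < b -> 0 < b %/ gcdn b e.
Proof. by move=> b0; rewrite divn_gt0 ?gcdn_gt0 ?b0 // dvdn_leq // dvdn_gcdl. Qed.

Lemma coprime_div_gcdn b e : 0 < b -> squarefree b -> coprime e (b %/ gcdn b e).
Proof.
move=> b0 sb; set k := gcdn e (b %/ gcdn b e).
have k0 : 0 < k by rewrite gcdn_gt0 div_gcdn_gt0 ?orbT.
rewrite /coprime -/k eqn_leq k0 andbT leqNgt; apply/negP => /pdiv_prime pl.
have le : pdiv k %| e := dvdn_trans (pdiv_dvd k) (dvdn_gcdl _ _).
have lb : pdiv k %| b %/ gcdn b e := dvdn_trans (pdiv_dvd k) (dvdn_gcdr _ _).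
have lg : pdiv k %| gcdn b e by rewrite dvdn_gcd le (dvdn_trans lb (dvdn_gcdn_div _ _)).
by apply: (sb _ pl); rewrite -(divnK (dvdn_gcdl b e)) mulnC dvdn_mul.
Qed.

Lemma prime_dvd_div_gcdn l b e : prime l -> l %| b -> ~~ (l %| e) -> l %| b %/ gcdn b e.
Proof.
move=> pl lb le; move: lb; rewrite -{1}(divnK (dvdn_gcdl b e)) Euclid_dvdM //.
by case/orP => // lg; rewrite (dvdn_trans lg (dvdn_gcdr _ _)) in le.
Qed.

Lemma squarefree_eq_mod g x e : 0 < g -> squarefree g ->
  (forall l, prime l -> l %| g -> x = e %[mod l]) -> x = e %[mod g].
Proof.
elim/ltn_ind: g => g IH g0 sg xe.
case: (ltngtP g 1) => [|g1|->]; [lia| |by rewrite !modn1].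
set l := pdiv g; have pl : prime l := pdiv_prime g1.
have [g' defg] : exists g', g = l * g'.
  by exists (g %/ l); rewrite mulnC divnK ?pdiv_dvd.
have g'0 : 0 < g' by move: g0; rewrite defg muln_gt0 => /andP [].
have g'g : g' %| g by rewrite defg dvdn_mull.
have clg' : coprime l g'.
  rewrite prime_coprime //; apply/negP => lg'.
  by apply: (sg l pl); rewrite defg dvdn_pmul2l ?prime_gt0.
apply/eqP; rewrite defg chinese_remainder //; apply/andP; split; apply/eqP.
  by apply: xe => //; apply: pdiv_dvd.
apply: IH => //; first by rewrite defg; have := prime_gt1 pl; nia.
  exact: squarefree_dvd g'g sg.
by move=> l' pl' l'g'; apply: xe => //; apply: dvdn_trans l'g' g'g.
Qed.

Lemma progr_meet x e d b : 0 < d -> 0 < b -> squarefree b ->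
  (forall l, prime l -> l %| d -> l %| b -> x = e %[mod l]) ->
  exists n1 n2, x + d * n1 = e + b * n2.
Proof.
move=> d0 b0 sb xe; set g := gcdn d b.
have gb : g %| b := dvdn_gcdr d b.
have xeg : x = e %[mod g].
  apply: squarefree_eq_mod; [by rewrite gcdn_gt0 d0 | exact: squarefree_dvd gb sb |].
  move=> l pl lg; apply: xe => //; last exact: dvdn_trans lg gb.
  exact: dvdn_trans lg (dvdn_gcdl _ _).
have xle : x <= e + b * x by nia.
have /dvdnP [k ek] : g %| e + b * x - x.
  rewrite -eqn_mod_dvd //.
  by rewrite -(divnK gb) mulnAC addnC modnMDl xeg.
have [u v Bezout _] := egcdnP b d0.
have ex : e + b * x = x + k * g by rewrite -ek subnKC.
have du : d * (u * k) = v * b * k + g * k by rewrite mulnA [d * u]mulnC Bezout mulnDl.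
by exists (u * k), (x + v * k); lia.
Qed.

Lemma progr_start a b : progr a b a.
Proof. by exists 0; rewrite muln0 addn0. Qed.

Lemma progr_trans a b e : progr a b e -> forall y, progr e b y -> progr a b y.
Proof. by move=> [n0 ->] y [n ->]; exists (n0 + n); rewrite mulnDr addnA. Qed.

Lemma progr_dvd x b L : b %| L -> forall y, progr x L y -> progr x b y.
Proof. by move=> /dvdnP [k ->] y [n ->]; exists (k * n); rewrite mulnA [b * k]mulnC. Qed.

Lemma progr_coprime a b e : coprime a b -> progr a b e -> coprime e b.
Proof. by move=> cab [n ->]; rewrite /coprime gcdnC addnC mulnC gcdnMDl gcdnC. Qed.

Lemma progr_mod a b e l : l %| b -> progr a b e -> e = a %[mod l].
Proof. by move=> /dvdnP [k ->] [n ->]; rewrite -mulnA mulnC addnC -mulnA mulnC modnMDl. Qed.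

Lemma kopen_progr a b : basic_set a b -> kopen (progr a b).
Proof.
move=> [a0 bs]; split; first by move=> x [n ->]; rewrite /Npos; lia.
by move=> x ax; exists a, b.
Qed.

Lemma basic_set_prime t q : 0 < t -> prime q -> ~~ (q %| t) -> basic_set t q.
Proof.
move=> t0 pq qt; split; rewrite // prime_gt0 //; split=> //.
by rewrite coprime_sym prime_coprime //; split=> //; apply: squarefree_prime.
Qed.

Lemma basic_set1 x : 0 < x -> basic_set x 1.
Proof. by move=> x0; do !split; rewrite // ?coprimen1 //; apply: squarefree1. Qed.

Lemma kopen_ext U V : (forall x, U x <-> V x) -> kopen U -> kopen V.
Proof.
move=> UV [Upos Ubase]; split; first by move=> x /UV /Upos.
move=> x /UV /Ubase [a [b [abs [ax sub]]]].
by exists a, b; split=> //; split=> // y /sub /UV.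
Qed.

Lemma kopenI U1 U2 : kopen U1 -> kopen U2 -> kopen (fun x => U1 x /\ U2 x).
Proof.
move=> [P1 O1] [P2 O2]; split; first by move=> x [/P1].
move=> x [/O1 [a1 [b1 [[_ [b10 [c1 s1]]] [ax1 sub1]]]]
          /O2 [a2 [b2 [[_ [b20 [c2 s2]]] [ax2 sub2]]]]].
set c := b2 %/ gcdn b2 b1.
have cb2 : c %| b2 := dvdn_gcdn_div b2 b1.
have b2b1c : b2 %| b1 * c.
  by rewrite -{1}(divnK (dvdn_gcdl b2 b1)) -/c mulnC dvdn_mul // dvdn_gcdr.
exists x, (b1 * c); split.
  split; first exact: P1 (sub1 _ ax1).
  split; first by rewrite muln_gt0 b10 div_gcdn_gt0.
  split.
    by rewrite coprimeMr (progr_coprime c1 ax1) (coprime_dvdr cb2) // (progr_coprime c2 ax2).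
  by apply: squarefree_mul; rewrite ?coprime_div_gcdn //; apply: squarefree_dvd cb2 s2.
split; first exact: progr_start.
move=> y xy; split.
  by apply/sub1/(progr_trans ax1); apply: progr_dvd xy; apply: dvdn_mulr.
by apply/sub2/(progr_trans ax2); apply: progr_dvd xy.
Qed.

Lemma kclosure_sub U V : (forall x, U x -> V x) -> forall y, kclosure U y -> kclosure V y.
Proof.
move=> UV y [y0 Ucl]; split=> // W oW Wy.
by have [z [Wz /UV]] := Ucl W oW Wy; exists z.
Qed.

Lemma kclosure_progr_mod e b t l : kclosure (progr e b) t -> prime l -> l %| b ->
  ~~ (l %| t) -> t = e %[mod l].
Proof.
move=> [t0 tcl] pl lb lt.
have tl := kopen_progr (basic_set_prime t0 pl lt).
have [y [[n ->] /(progr_mod lb) <-]] := tcl _ tl (progr_start _ _).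
by rewrite addnC mulnC modnMDl.
Qed.

Lemma kclosure_progr t e b : 0 < t -> 0 < b -> squarefree b ->
  (forall l, prime l -> l %| b -> ~~ (l %| t) -> t = e %[mod l]) ->
  kclosure (progr e b) t.
Proof.
move=> t0 b0 sb te; split=> // V [_ Vbase] /Vbase [a [d [[_ [d0 [cad _]]] [ta sub]]]].
have ctd : coprime t d := progr_coprime cad ta.
have [n1 [n2 meet]] : exists n1 n2, t + d * n1 = e + b * n2.
  by apply: progr_meet => // l pl ld lb; apply: te => //; apply: prime_coprime_ndvd ctd.
exists (t + d * n1); split; last by exists n2.
by apply/sub/(progr_trans ta); exists n1.
Qed.

Definition FE_le (E E' : seq nat) : Prop := forall B, FE E B -> FE E' B.

Lemma FE_le_trans E1 E2 E3 : FE_le E1 E2 -> FE_le E2 E3 -> FE_le E1 E3.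
Proof. by move=> le12 le23 B /le12 /le23. Qed.

Lemma FE_superset E A B : FE E A -> (forall y, B y -> 0 < y) ->
  (forall y, 0 < y -> A y -> B y) -> FE E B.
Proof.
move=> [_ [Us [Uopen Ucl]]] Bpos AB; split=> //.
by exists Us; split=> // y y0 ycl; apply: AB y0 (Ucl y y0 ycl).
Qed.

Lemma FE_Npos E : all_pos E -> FE E Npos.
Proof.
move=> /allP Epos; split=> //; exists (fun x => progr x 1); split=> // x /Epos x0.
by split; [apply/kopen_progr/basic_set1 | apply: progr_start].
Qed.

Lemma FEI E A1 A2 : FE E A1 -> FE E A2 -> FE E (fun y => A1 y /\ A2 y).
Proof.
move=> [P1 [U1 [O1 K1]]] [_ [U2 [O2 K2]]]; split; first by move=> x [/P1].
exists (fun x y => U1 x y /\ U2 x y); split.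
  move=> x xE; have [o1 u1] := O1 x xE; have [o2 u2] := O2 x xE.
  by split; [apply: kopenI | split].
move=> y y0 ycl; split; [apply: K1 | apply: K2] => // x /ycl; apply: kclosure_sub => z [] //.
Qed.

Lemma FE1_kclosure e U : kopen U -> U e -> FE [:: e] (kclosure U).
Proof.
move=> oU Ue; split; first by move=> x [].
by exists (fun _ => U); split=> [x|y _]; [rewrite inE => /eqP -> | apply; rewrite inE].
Qed.

Lemma FE_le_subset E E' : all_pos E' -> {subset E <= E'} -> FE_le E E'.
Proof.
move=> /allP E'pos EE' B [Bpos [Us [Uopen Ucl]]]; split=> //.
exists (fun x => if x \in E then Us x else progr x 1); split.
  move=> x xE'; case: ifP => [/Uopen //|_].
  by split; [apply/kopen_progr/basic_set1/E'pos | apply: progr_start].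
by move=> y y0 ycl; apply: Ucl => // x xE; move: (ycl x (EE' x xE)); rewrite xE.
Qed.

Lemma FE_le_cons e E E' : FE_le [:: e] E' -> FE_le E E' -> FE_le (e :: E) E'.
Proof.
move=> le_e le_E B [Bpos [Us [Uopen Ucl]]].
have [oU Ue] := Uopen e (mem_head _ _).
have Fe := le_e _ (FE1_kclosure oU Ue).
have FE' : FE E' (fun y => 0 < y /\ forall x, x \in E -> kclosure (Us x) y).
  apply: le_E; split; first by move=> y [].
  by exists Us; split=> [x xE|y y0 ycl //]; apply: Uopen; rewrite inE xE orbT.
apply: FE_superset (FEI Fe FE') Bpos _ => y y0 [ecl [_ Ecl]].
by apply: Ucl => // x; rewrite inE => /predU1P [->|/Ecl].
Qed.

Lemma FE_le_join E E' : all_pos E' ->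
  (forall e, e \in E -> FE_le [:: e] E') -> FE_le E E'.
Proof.
move=> E'pos; elim: E => [_ B [Bpos [Us [_ Bsup]]]|e E IH le_E].
  by apply: FE_superset (FE_Npos E'pos) Bpos _ => y y0 _; apply: Bsup.
apply: FE_le_cons; first by apply: le_E; rewrite mem_head.
by apply: IH => x xE; apply: le_E; rewrite inE xE orbT.
Qed.

Lemma FE_preimage h E B : khomeo h -> all_pos E -> FE (map h E) B ->
  FE E (fun x => 0 < x /\ B (h x)).
Proof.
move=> [hpos [_ [_ [_ hcont]]]] /allP Epos [Bpos [Us [Uopen Ucl]]].
split; first by move=> x [].
exists (fun x v => 0 < v /\ Us (h x) (h v)); split.
  move=> x xE; have [oU Uhx] := Uopen (h x) (map_f h xE).
  by split; [apply: hcont | split; first exact: Epos].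
move=> y y0 ycl; split=> //; apply: Ucl => [|_ /mapP [x xE ->]]; first exact: hpos.
have [_ xcl] := ycl x xE; split; first exact: hpos.
move=> V oV Vhy; have [z [[z0 Vhz] [_ Uz]]] := xcl _ (hcont V oV) (conj y0 Vhy).
by exists (h z).
Qed.

Definition kinverse (h g : nat -> nat) : Prop :=
  [/\ khomeo h, khomeo g, forall y, 0 < y -> h (g y) = y & forall x, 0 < x -> g (h x) = x].

Lemma kinverse_sym h g : kinverse h g -> kinverse g h.
Proof. by case. Qed.

Lemma khomeo_kinverse h : khomeo h -> exists g, kinverse h g.
Proof.
move=> hh; have [hpos [hinj [hsurj [hopen hcont]]]] := hh.
have hsurj' y : exists x, (y == 0) || (0 < x) && (h x == y).
  case: (posnP y) => [->|/hsurj [x [x0 <-]]]; first by exists 0.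
  by exists x; rewrite x0 eqxx orbT.
pose g y := xchoose (hsurj' y).
have [gpos hgK] : (forall y, 0 < y -> 0 < g y) /\ (forall y, 0 < y -> h (g y) = y).
  by split=> y y0; have := xchooseP (hsurj' y); rewrite -/(g y) gtn_eqF //= => /andP [? /eqP].
have ghK x : 0 < x -> g (h x) = x.
  by move=> x0; apply: hinj => //; [apply/gpos/hpos | apply/hgK/hpos].
exists g; split=> //; split=> //; split.
  by move=> x y x0 y0 gxy; rewrite -(hgK x x0) -(hgK y y0) gxy.
split; first by move=> x x0; exists (h x); split; [apply: hpos | apply: ghK].
split=> [U oU|V oV]; [apply: kopen_ext (hcont U oU) | apply: kopen_ext (hopen V oV)] => x.
  split=> [[x0 Uhx]|[y [Uy <-]]]; first by exists (h x); rewrite ghK.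
  by have y0 := proj1 oU y Uy; split; [apply: gpos | rewrite hgK].
split=> [[y [Vy <-]]|[x0 Vgx]]; last by exists (g x); rewrite hgK.
by have y0 := proj1 oV y Vy; split; [apply: hpos | rewrite ghK].
Qed.

Lemma map_kinverse h g E : kinverse h g -> all_pos E -> map g (map h E) = E.
Proof.
case=> _ _ _ ghK /allP Epos; rewrite -map_comp -[RHS]map_id.
by apply/eq_in_map => x /Epos /ghK.
Qed.

Lemma all_pos_map h E : khomeo h -> all_pos E -> all_pos (map h E).
Proof. by case=> hpos _ /allP Epos; apply/allP => _ /mapP [x /Epos x0 ->]; apply: hpos. Qed.

Lemma push_FE h g E B : kinverse h g -> all_pos E ->
  push_family h (FE E) B <-> FE (map h E) B.
Proof.
move=> hg Epos; have [hh gh hgK _] := hg; have [hpos _] := hh.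
split=> [[A [FA ->]]|FB].
  have := FE_preimage gh (all_pos_map hh Epos); rewrite map_kinverse // => /(_ _ FA) FgA.
  apply: FE_superset FgA _ _ => [_ [x [/(proj1 FA) x0 <-]]|y y0 [_ Agy]]; first exact: hpos.
  by exists (g y); rewrite hgK.
exists (fun x => 0 < x /\ B (h x)); split; first exact: FE_preimage.
apply: functional_extensionality => y; apply: propositional_extensionality.
split=> [By|[x [[_ Bhx] <-]] //].
have y0 := proj1 FB y By; exists (g y); rewrite hgK //.
by split=> //; split=> //; apply: (proj1 gh).
Qed.

Lemma FE_le_map h g E E' : kinverse h g -> all_pos E -> all_pos E' ->
  FE_le E E' -> FE_le (map h E) (map h E').
Proof.
move=> hg Epos E'pos le_EE' B /(push_FE _ hg Epos) [A [/le_EE' FA ->]].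
by apply/(push_FE _ hg E'pos); exists A.
Qed.

Lemma FE_le_mapE h g E E' : kinverse h g -> all_pos E -> all_pos E' ->
  FE_le (map h E) (map h E') <-> FE_le E E'.
Proof.
move=> hg Epos E'pos; split; last exact: FE_le_map hg Epos E'pos.
have [hh _ _ _] := hg.
move/(FE_le_map (kinverse_sym hg) (all_pos_map hh Epos) (all_pos_map hh E'pos)).
by rewrite !(map_kinverse hg).
Qed.

Definition forced_residue (q : nat) (E : seq nat) (z : nat) : Prop :=
  forall u, ~~ (q %| u) -> (forall e, e \in E -> q %| e \/ u = e %[mod q]) -> u = z %[mod q].

Lemma basic_nbhds_modulus (Us : nat -> nat -> Prop) (E : seq nat) q : prime q ->
  (forall e, e \in E -> kopen (Us e) /\ Us e e) ->
  exists M, coprime q M /\ forall e, e \in E -> exists a b,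
    [/\ basic_set a b, progr a b e, forall y, progr a b y -> Us e y & b %| q * M].
Proof.
move=> pq; elim: E => [_|e E IH Uopen]; first by exists 1; rewrite coprimen1.
have [|M [cqM nbhds]] := IH; first by move=> x xE; apply: Uopen; rewrite inE xE orbT.
have [[_ Ubase] Ue] := Uopen e (mem_head _ _).
have [a [b [[a0 [b0 [cab sb]]] [ae sub]]]] := Ubase e Ue.
set c := b %/ gcdn b q.
have bqc : b %| q * c by rewrite -{1}(divnK (dvdn_gcdl b q)) mulnC dvdn_mul // dvdn_gcdr.
exists (c * M); split; first by rewrite coprimeMr coprime_div_gcdn.
move=> x; rewrite inE => /predU1P [->|/nbhds [a' [b' [abs' ax' sub' b'qM]]]].
  by exists a, b; split=> //; rewrite mulnA dvdn_mulr.
by exists a', b'; split=> //; rewrite mulnCA dvdn_mull.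
Qed.

Lemma FE_le1_forced z E q : FE_le [:: z] E -> 0 < z -> prime q -> ~~ (q %| z) ->
  forced_residue q E z.
Proof.
move=> le_zE z0 pq qz u qu uE.
have zq := FE1_kclosure (kopen_progr (basic_set_prime z0 pq qz)) (progr_start z q).
have [_ [Us [Uopen Ucl]]] := le_zE _ zq.
have [M [cqM nbhds]] := basic_nbhds_modulus pq Uopen.
(* t is u modulo q, and divisible by every other prime of the neighbourhood moduli *)
pose t := chinese q M u 0.
have tu : t = u %[mod q] := chinese_modl cqM u 0.
have Mt : M %| t by rewrite /dvdn chinese_modr // mod0n.
have qt : ~~ (q %| t) by rewrite /dvdn tu.
have t0 : 0 < t by case: posnP qt => // ->; rewrite dvdn0.
suff /kclosure_progr_mod : kclosure (progr z q) t by move/(_ q pq (dvdnn q) qt) <-.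
apply: Ucl => // e eE; have [a [b [[_ [b0 [cab sb]]] ae sub bqM]]] := nbhds e eE.
apply: kclosure_sub (fun y ey => sub y (progr_trans ae ey)) _ _.
apply: kclosure_progr => // l pl lb lt.
have [eq_lq|lq] := eqVneq l q.
  subst l; rewrite tu; case: (uE e eE) => [qe|//].
  by have := prime_coprime_ndvd pq lb (progr_coprime cab ae); rewrite qe.
have := dvdn_trans lb bqM; rewrite Euclid_dvdM // dvdn_prime2 // (negbTE lq) /=.
by move/dvdn_trans/(_ Mt); rewrite (negbTE lt).
Qed.

Lemma forced_FE_le1 z E : 0 < z -> all_pos E ->
  (forall q, prime q -> odd q -> ~~ (q %| z) -> forced_residue q E z) -> FE_le [:: z] E.
Proof.
move=> z0 /allP Epos zforced B [Bpos [Us [Uopen Ucl]]].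
have [[_ Ubase] Uz] := Uopen z (mem_head _ _).
have [a [b [[_ [b0 [cab sb]]] [az sub]]]] := Ubase z Uz.
have czb := progr_coprime cab az.
split=> //; exists (fun e => progr e (b %/ gcdn b e)); split.
  move=> e eE; split; last exact: progr_start.
  apply: kopen_progr; split; first exact: Epos.
  split; first exact: div_gcdn_gt0.
  by split; [apply: coprime_div_gcdn | apply: squarefree_dvd (dvdn_gcdn_div b e) sb].
move=> y y0 ycl; apply: Ucl => // _ /[1!inE] /eqP ->.
apply: kclosure_sub (fun w zw => sub w (progr_trans az zw)) _ _.
apply: kclosure_progr => // l pl lb ly.
have lz := prime_coprime_ndvd pl lb czb.
have [l2|ol] := even_prime pl.
  by move: ly lz; rewrite l2 /dvdn !modn2; case: (odd y); case: (odd z).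
apply: zforced => // e eE; have [le|le] := boolP (l %| e); [by left | right].
exact: kclosure_progr_mod (ycl e eE) pl (prime_dvd_div_gcdn pl lb le) ly.
Qed.

Lemma eqn_mod_double q x : (2 * x == x %[mod q]) = (q %| x).
Proof. by rewrite mul2n -addnn -{3}[x]addn0 eqn_modDl mod0n. Qed.

Lemma odd_prime_dvd_double q x : prime q -> odd q -> (q %| 2 * x) = (q %| x).
Proof. by move=> pq oq; rewrite Euclid_dvdM // gtnNdvd // odd_prime_gt2. Qed.

Lemma forced_residue_split q E z e1 e2 : e1 \in E -> e2 \in E ->
  ~~ (q %| e1) -> ~~ (q %| e2) -> e1 != e2 %[mod q] -> forced_residue q E z.
Proof.
move=> e1E e2E qe1 qe2 e12 u _ uE.
have [qe1'|u1] := uE e1 e1E; first by rewrite qe1' in qe1.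
have [qe2'|u2] := uE e2 e2E; first by rewrite qe2' in qe2.
by rewrite -u1 -u2 eqxx in e12.
Qed.

Lemma FE_le1_multiple p z : prime p -> odd p -> 0 < z -> p %| z -> FE_le [:: z] [:: p; 2 * p].
Proof.
move=> pp op z0 pz; apply: forced_FE_le1 => // [|q pq oq qz].
  by rewrite /= muln_gt0 prime_gt0.
have qp : ~~ (q %| p).
  by rewrite dvdn_prime2 //; apply: contra qz => /eqP ->.
apply: (@forced_residue_split _ _ _ (2 * p) p); rewrite ?inE ?eqxx ?orbT //.
  by rewrite odd_prime_dvd_double.
by rewrite eqn_mod_double.
Qed.

Lemma FE_le1_dvd q z E : prime q -> odd q -> 0 < z ->
  (forall e, e \in E -> q %| e) -> FE_le [:: z] E -> q %| z.
Proof.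
move=> pq oq z0 qE le_zE; apply: contraT => qz.
have forced := FE_le1_forced le_zE z0 pq qz.
have /eqP : 2 * z = z %[mod q] by apply: forced => [|e /qE]; [rewrite odd_prime_dvd_double | left].
by rewrite eqn_mod_double (negbTE qz).
Qed.

Lemma not_FE_le_double p c : prime p -> odd p -> 0 < c -> ~~ (p %| c) ->
  ~ FE_le [:: 2 * c] [:: p; 2 * p; c].
Proof.
move=> pp op c0 pc le_2c.
have forced := FE_le1_forced le_2c (ltac:(lia)) pp (ltac:(by rewrite odd_prime_dvd_double)).
have /esym/eqP : c = 2 * c %[mod p].
  apply: forced => // e; rewrite !inE => /or3P [] /eqP ->; [left | left | right] => //.
  exact: dvdn_mull.
by rewrite eqn_mod_double; apply/negP.
Qed.

Lemma exists_avoiding_residues (s : seq nat) (f : nat -> nat) : uniq s ->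
  (forall q, q \in s -> prime q /\ odd q) ->
  exists w, 0 < w /\ forall q, q \in s -> ~~ (q %| w) /\ w != f q %[mod q].
Proof.
elim: s => [_ _|q s IH /andP [qs us] sprimes]; first by exists 1.
have sprimes' r : r \in s -> prime r /\ odd r by move=> rs; apply: sprimes; rewrite inE rs orbT.
have [w [w0 ws]] := IH us sprimes'.
have [pq oq] := sprimes q (mem_head _ _).
pose M := \prod_(r <- s) r.
have cMq : coprime M q.
  rewrite coprime_sym prime_coprime // Euclid_dvd_prod // big_has; apply/hasPn => r rs.
  by rewrite dvdn_prime2 ?(sprimes' r rs).1 //; apply: contraNneq qs => ->.
(* any residue in {1, 2} other than that of f q will do, as q > 2 *)
pose t := if f q %% q == 1 then 2 else 1.
have tq : t %% q = t by rewrite modn_small // /t; have := odd_prime_gt2 oq pq; case: ifP => _; lia.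
pose w' := chinese M q w t.
have w'q : w' = t %[mod q] := chinese_modr cMq w t.
have qw' : ~~ (q %| w') by rewrite /dvdn w'q tq /t; case: ifP.
exists w'; split; first by case: posnP qw' => // ->; rewrite dvdn0.
move=> r; rewrite inE => /predU1P [->|rs].
  by rewrite qw' w'q tq /t; case: ifP => [/eqP -> //|/negbT]; rewrite eq_sym.
have rM : r %| M by rewrite /M (bigD1_seq r) //= dvdn_mulr.
have w'r : w' = w %[mod r] by rewrite -[LHS](modn_dvdm _ rM) -[RHS](modn_dvdm _ rM) chinese_modl.
by rewrite /dvdn w'r; apply: ws.
Qed.

Lemma exists_FE_le_triple x y : 0 < x -> 0 < y -> x != y ->
  (forall r, prime r -> odd r -> r %| x -> ~~ (r %| y)) ->
  exists w, 0 < w /\ forall z, 0 < z -> FE_le [:: z] [:: x; y; w].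
Proof.
move=> x0 y0 xy xy_cop.
pose D := x * y * (x - y + (y - x)).
have D0 : 0 < D by rewrite !muln_gt0 x0 y0; case: ltngtP xy => //; lia.
(* w must avoid 0 and the residue of whichever of x, y is prime to q *)
have [|w [w0 ws]] := exists_avoiding_residues (fun q => if q %| x then y else x)
    (filter_uniq odd (primes_uniq D)).
  by move=> q; rewrite mem_filter mem_primes => /andP [-> /andP []].
exists w; split=> // z z0.
apply: forced_FE_le1 => // [|q pq oq qz]; first by rewrite /= x0 y0 w0.
have [qD|qD] := boolP (q %| D).
  have [qw] := ws q (ltac:(by rewrite mem_filter oq mem_primes pq D0 qD)).
  have [qx|qx] := boolP (q %| x) => wq.
    by apply: (@forced_residue_split _ _ _ w y); rewrite ?inE ?eqxx ?orbT ?xy_cop.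
  by apply: (@forced_residue_split _ _ _ w x); rewrite ?inE ?eqxx ?orbT.
have qx : ~~ (q %| x) by apply: contra qD => qx; rewrite /D -mulnA dvdn_mulr.
have qy : ~~ (q %| y) by apply: contra qD => qy; rewrite /D mulnAC dvdn_mull.
apply: (@forced_residue_split _ _ _ x y); rewrite ?inE ?eqxx ?orbT //.
apply: contra qD => /eqP xyq; rewrite /D dvdn_mull //.
have dvd_sub a b : a = b %[mod q] -> q %| a - b.
  case: (leqP b a) => [ba ab|/ltnW ab _]; first by rewrite -eqn_mod_dvd // ab.
  by have -> : a - b = 0 by apply/eqP; rewrite subn_eq0.
by rewrite dvdn_add // dvd_sub.
Qed.

Lemma khomeo_common_odd_prime h g p : kinverse h g -> prime p -> odd p ->
  exists r, [/\ prime r, odd r, r %| h p & r %| h (2 * p)].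
Proof.
move=> hg pp op; have [hh [gpos _] hgK _] := hg; have [hpos [hinj _]] := hh.
have p0 := prime_gt0 pp; have p20 : 0 < 2 * p by rewrite muln_gt0.
have x0 := hpos p p0; have y0 := hpos _ p20.
have [/hasP [r] | /hasPn no_common] :=
  boolP (has (fun r => odd r && (r %| h (2 * p))) (primes (h p))).
  by rewrite mem_primes => /and3P [pr _ rx] /andP [or ry]; exists r.
exfalso.
have xy_cop r : prime r -> odd r -> r %| h p -> ~~ (r %| h (2 * p)).
  by move=> pr or rx; move: (no_common r); rewrite mem_primes pr x0 rx or => /(_ isT).
have xy : h p != h (2 * p) by apply/eqP => /hinj; move/(_ p0 p20); lia.
have [w [w0 le_w]] := exists_FE_le_triple x0 y0 xy xy_cop.
have c0 := gpos w w0; have hc := hgK w w0; set c := g w in c0 hc.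
have pos3 : all_pos [:: p; 2 * p; c] by rewrite /= p0 p20 c0.
have le_c z : 0 < z -> FE_le [:: z] [:: p; 2 * p; c].
  move=> z0; apply/(FE_le_mapE (E := [:: z]) hg _ pos3); first by rewrite /= z0.
  by rewrite /= hc; apply/le_w/hpos.
have [pc|pc] := boolP (p %| c).
  suff : p %| 1 by rewrite Euclid_dvd1.
  apply: (FE_le1_dvd (z := 1) pp op isT _ (le_c 1 isT)) => e.
  by rewrite !inE => /or3P [] /eqP ->; rewrite ?dvdn_mull.
have c20 : 0 < 2 * c by rewrite muln_gt0.
exact: not_FE_le_double pp op c0 pc (le_c _ c20).
Qed.

Lemma khomeo_dvd_image h g p : kinverse h g -> prime p -> odd p ->
  exists r, [/\ prime r, odd r & forall v, 0 < v -> p %| v -> r %| h v].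
Proof.
move=> hg pp op; have [[hpos _] _ _ _] := hg.
have [r [pr or rx ry]] := khomeo_common_odd_prime hg pp op.
exists r; split=> // v v0 pv.
have pos2 : all_pos [:: p; 2 * p] by rewrite /= muln_gt0 prime_gt0.
have le_v := FE_le_map hg (E := [:: v]) (ltac:(by rewrite /= v0)) pos2
  (FE_le1_multiple pp op v0 pv).
by apply: (FE_le1_dvd pr or (hpos v v0) _ le_v) => e; rewrite !inE => /orP [] /eqP ->.
Qed.

Lemma khomeo_dvd_imageE h g p : kinverse h g -> prime p -> odd p ->
  exists r, [/\ prime r, odd r & forall v, 0 < v -> (r %| h v) = (p %| v)].
Proof.
move=> hg pp op; have [[hpos _] [gpos _] hgK ghK] := hg.
have [r [pr or pr_dvd]] := khomeo_dvd_image hg pp op.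
have [s [ps os rs_dvd]] := khomeo_dvd_image (kinverse_sym hg) pr or.
have p0 := prime_gt0 pp.
have sp : s = p.
  have := rs_dvd (h p) (hpos p p0) (pr_dvd p p0 (dvdnn p)).
  by rewrite ghK // dvdn_prime2 // => /eqP.
exists r; split=> // v v0; apply/idP/idP; last exact: pr_dvd.
by move/(rs_dvd _ (hpos v v0)); rewrite sp ghK.
Qed.

Lemma FE_le1_congr p c c' : prime p -> odd p -> 0 < c -> 0 < c' -> ~~ (p %| c) ->
  c' = c %[mod p] -> FE_le [:: c'] [:: p; 2 * p; c].
Proof.
move=> pp op c0 c'0 pc c'c; apply: forced_FE_le1 => // [|q pq oq qc' u qu uE].
  by rewrite /= c0 muln_gt0 prime_gt0.
have [eq_qp|qp] := eqVneq q p.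
  subst q; rewrite c'c; have [|pc'|//] := uE c; first by rewrite !inE eqxx !orbT.
  by rewrite pc' in pc.
have qp' : ~~ (q %| p) by rewrite dvdn_prime2 // qp.
apply: (@forced_residue_split _ _ _ (2 * p) p) qu uE; rewrite ?inE ?eqxx ?orbT //.
  by rewrite odd_prime_dvd_double.
by rewrite eqn_mod_double.
Qed.

Lemma khomeo_residue_inj h g p r d d' : kinverse h g -> prime p -> odd p -> prime r ->
  (forall v, 0 < v -> (r %| h v) = (p %| v)) -> 0 < d -> 0 < d' -> ~~ (r %| d) ->
  g d = g d' %[mod p] -> d' = d %[mod r].
Proof.
move=> hg pp op pr hdvd d0 d'0 rd gdd'.
have [[hpos _] [gpos _] hgK _] := hg.
have c0 := gpos d d0; have c'0 := gpos d' d'0.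
have pos3 c : 0 < c -> all_pos [:: p; 2 * p; c].
  by move=> c_0; rewrite /= c_0 muln_gt0 prime_gt0.
have pc : ~~ (p %| g d) by rewrite -hdvd ?hgK.
have pc' : ~~ (p %| g d') by move: pc; rewrite /dvdn gdd'.
have rd' : ~~ (r %| d') by rewrite -(hgK d') // hdvd.
have le_dd' : FE_le [:: p; 2 * p; g d] [:: p; 2 * p; g d'].
  apply: FE_le_join => [|e]; first exact: pos3.
  rewrite !inE orbA => /orP [e_p2p|/eqP ->]; last exact: FE_le1_congr.
  by apply: FE_le_subset (pos3 _ c'0) _ => a; rewrite inE => /eqP ->; rewrite !inE orbA e_p2p.
have := FE_le_map hg (pos3 _ c0) (pos3 _ c'0) le_dd'; rewrite /= !hgK // => le_hdd'.
have le_d : FE_le [:: d] [:: h p; h (2 * p); d'].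
  apply: (FE_le_trans _ le_hdd'); apply: FE_le_subset => [|a].
    have p0 := prime_gt0 pp; have p20 : 0 < 2 * p by rewrite muln_gt0.
    by rewrite /= d0 (hpos p p0) (hpos _ p20).
  by rewrite inE => /eqP ->; rewrite !inE eqxx !orbT.
have forced := FE_le1_forced le_d d0 pr rd.
apply: (forced d' rd') => e; rewrite !inE => /or3P [] /eqP ->; [left | left | by right].
  by rewrite hdvd ?prime_gt0.
by rewrite hdvd ?dvdn_mull ?muln_gt0 ?prime_gt0.
Qed.

Lemma khomeo_dvd_imageE_leq h g p r : kinverse h g -> prime p -> odd p -> prime r ->
  (forall v, 0 < v -> (r %| h v) = (p %| v)) -> r <= p.
Proof.
move=> hg pp op pr hdvd; have [_ [gpos _] hgK _] := hg.
have small_pos d : d \in iota 1 r.-1 -> 0 < d < r.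
  by rewrite mem_iota; have := prime_gt0 pr; lia.
have rd d : d \in iota 1 r.-1 -> ~~ (r %| d).
  by move=> /small_pos /andP [d0 dr]; rewrite gtnNdvd.
have inj : {in iota 1 r.-1 &, injective (fun d => g d %% p)}.
  move=> d d' ds d's gdd'.
  have := khomeo_residue_inj hg pp op pr hdvd _ _ (rd d ds) gdd'.
  have /andP [d0 dr] := small_pos d ds; have /andP [d'0 d'r] := small_pos d' d's.
  by rewrite !modn_small // => /(_ d0 d'0) <-.
have sub : {subset map (fun d => g d %% p) (iota 1 r.-1) <= iota 1 p.-1}.
  move=> _ /mapP [d ds ->]; have /andP [d0 _] := small_pos d ds.
  have : g d %% p != 0 by rewrite -/(dvdn p _) -hdvd ?hgK ?gpos ?rd.
  by rewrite mem_iota; have := ltn_pmod (g d) (prime_gt0 pp); lia.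
have := uniq_leq_size (etrans (map_inj_in_uniq inj) (iota_uniq 1 r.-1)) sub.
by rewrite size_map !size_iota; have := prime_gt0 pr; have := prime_gt0 pp; lia.
Qed.

Lemma khomeo_dvd_odd_prime h p : khomeo h -> prime p -> odd p ->
  forall v, 0 < v -> (p %| h v) = (p %| v).
Proof.
move=> hh pp op; have [g hg] := khomeo_kinverse hh; have [[hpos _] [gpos _] hgK _] := hg.
have [r [pr or hdvd]] := khomeo_dvd_imageE hg pp op.
have gdvd v : 0 < v -> (p %| g v) = (r %| v) by move=> v0; rewrite -hdvd ?gpos ?hgK.
have rp := khomeo_dvd_imageE_leq hg pp op pr hdvd.
have pr_le := khomeo_dvd_imageE_leq (kinverse_sym hg) pr or pp gdvd.
have erp : r = p by apply/eqP; rewrite eqn_leq rp.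
by move: hdvd; rewrite erp.
Qed.

Lemma FE_le_image_p_2p h p : khomeo h -> prime p -> odd p ->
  FE_le [:: h p; h (2 * p)] [:: p; 2 * p].
Proof.
move=> hh pp op; have [hpos _] := hh.
have p0 := prime_gt0 pp; have p20 : 0 < 2 * p by rewrite muln_gt0.
have dvd_image v : 0 < v -> p %| v -> FE_le [:: h v] [:: p; 2 * p].
  move=> v0 pv; have hv0 : 0 < h v := hpos v v0.
  by apply: FE_le1_multiple; rewrite ?khomeo_dvd_odd_prime.
apply: FE_le_join => [|_ /[!inE] /orP [] /eqP ->]; first by rewrite /= p0 p20.
  exact: dvd_image.
by apply: dvd_image; rewrite ?dvdn_mull.
Qed.

Unset Implicit Arguments.

Theorem lemma3p13 (h : nat -> nat) (p : nat) :
  khomeo h -> prime p -> odd p ->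
  forall B : nat -> Prop, push_family h (FE [:: p; 2 * p]) B <-> FE [:: p; 2 * p] B.
Proof.
move=> hh pp op B.
have [g hg] := khomeo_kinverse hh; have [_ gh hgK _] := hg.
have p0 := prime_gt0 pp; have p20 : 0 < 2 * p by rewrite muln_gt0.
have pos2 : all_pos [:: p; 2 * p] by rewrite /= p0 p20.
apply: (iff_trans (push_FE B hg pos2)); split; first exact: FE_le_image_p_2p.
have pos_g2 : all_pos [:: g p; g (2 * p)] by apply: (all_pos_map gh pos2).
have := FE_le_map hg pos_g2 pos2 (FE_le_image_p_2p gh pp op).
by rewrite /= !hgK //; apply.
Qed.
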